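(* Assume $b_0\neq 0$. Then $$X(b_0)=\bigcup_{n\in\mathbb{Z}} (t^n,t^{-n})\cdot M(b_0)(\mathcal{O}_{\overline{E}}).$$ In particular, if $b_0\notin \mathcal{O}_{\overline{E}}$ then $X(b_0)=\emptyset$.
   Context: Let $\overline{E}$ be a nonarchimedean local field with ring of integers $\mathcal{O}_{\overline{E}}$ and residue field $k$ of characteristic $\neq 2$, and let $t\in\mathcal{O}_{\overline{E}}$ be a uniformizer. Consider the split quadratic extension $\overline{K}=\overline{E}\oplus\overline{E}$. For $b_0\in\overline{E}$, let $M(b_0)$ denote the set of pairs of column vectors $x=(x_1,x_2)^T$, $y=(y_1,y_2)^T$ in $\overline{E}^2$ with $\det(x,y)=x_1y_2-x_2y_1=b_0$ (i.e. $2\times 2$ matrices with columns $x,y$ and determinant $b_0$), and $M(b_0)(\mathcal{O}_{\overline{E}})$ the subset of such pairs with all entries in $\mathcal{O}_{\overline{E}}$. Let $X(b_0)\subset M(b_0)$ be the subset of $(x,y)$ such that $x_1x_2\in\mathcal{O}_{\overline{E}}$, $y_1y_2\in\mathcal{O}_{\overline{E}}$ and $x_1y_2+x_2y_1\in\mathcal{O}_{\overline{E}}$. The element $(t^n,t^{-n})\in \overline{K}^*$ (of norm $1$) acts on $M(b_0)$ by $(x_1,x_2,y_1,y_2)\mapsto (t^nx_1,t^{-n}x_2,t^ny_1,t^{-n}y_2)$. *)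

From mathcomp Require Import all_boot all_order all_algebra.
Set Implicit Arguments. Unset Strict Implicit. Unset Printing Implicit Defensive.
Import Order.TTheory GRing.Theory Num.Theory.
Local Open Scope ring_scope.

(* A nonarchimedean local field is modelled as a field F together with a
   normalized discrete valuation v : F -> int (only meaningful on nonzero
   elements; the value v 0 is irrelevant), such that F is complete for v and
   the residue field O/tO is finite. *)
Section LocalField.
Variable F : fieldType.
Variable v : F -> int.

Definition inO (x : F) : Prop := x = 0 \/ 0 <= v x.
Definition inP (x : F) : Prop := x = 0 \/ 0 < v x.
Definition small (N : int) (x : F) : Prop := x = 0 \/ N <= v x.

Record is_local_field : Prop := {
  lf_vM : forall x y, x != 0 -> y != 0 -> v (x * y) = v x + v y;
  lf_vD : forall x y, x != 0 -> y != 0 -> x + y != 0 ->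
            Num.min (v x) (v y) <= v (x + y);
  lf_surj : forall n : int, exists x, x != 0 /\ v x = n;
  lf_complete : forall a : nat -> F,
      (forall N : int, exists M : nat, forall m n, (M <= m)%N -> (M <= n)%N ->
          small N (a m - a n)) ->
      exists l : F, forall N : int, exists M : nat, forall n, (M <= n)%N ->
          small N (a n - l);
  lf_residue_finite : exists s : seq F, (forall r, r \in s -> inO r) /\
      forall x, inO x -> exists2 r, r \in s & inP (x - r)
}.

(* residue characteristic different from 2: 2 is a unit of O_E *)
Definition residue_char_not2 : Prop := (2 : F) != 0 /\ v 2 = 0.

(* M(b0): pairs of column vectors x = (x1,x2), y = (y1,y2) with det = b0 *)
Definition Mset (b0 : F) (x y : F * F) : Prop :=
  x.1 * y.2 - x.2 * y.1 = b0.

Definition MsetO (b0 : F) (x y : F * F) : Prop :=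
  Mset b0 x y /\ inO x.1 /\ inO x.2 /\ inO y.1 /\ inO y.2.

Definition Xset (b0 : F) (x y : F * F) : Prop :=
  Mset b0 x y /\ inO (x.1 * x.2) /\ inO (y.1 * y.2) /\
  inO (x.1 * y.2 + x.2 * y.1).

(* action of (t^n, t^-n) on a column vector *)
Definition tact (t : F) (n : int) (x : F * F) : F * F :=
  (t ^ n * x.1, t ^ (- n) * x.2).

End LocalField.

(** The three conditions defining [X(b0)] are invariant under the torus action,
    and they already force [x1 y2] and [x2 y1] to be integral: both are roots of
    [T^2 - (x1 y2 + x2 y1) T + (x1 x2)(y1 y2)], whose coefficients lie in [O].
    Hence [b0 = x1 y2 - x2 y1] is integral, and the valuations satisfy
    [v x1 + v x2 >= 0], [v y1 + v y2 >= 0], [v x1 + v y2 >= 0], [v y1 + v x2 >= 0].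
    With [n] the smaller of [v x1] and [v y1] (over the nonzero ones; since
    [b0 <> 0], [x1] and [y1] are not both zero), translating by [(t^-n, t^n)]
    makes all four entries integral. *)

From mathcomp Require Import all_boot all_order all_algebra.
From mathcomp Require Import zify.
Set Implicit Arguments. Unset Strict Implicit. Unset Printing Implicit Defensive.
Import Order.TTheory GRing.Theory Num.Theory.
Local Open Scope ring_scope.

Section Valuation.
Variables (F : fieldType) (v : F -> int).
Hypothesis vM : forall {x y : F}, x != 0 -> y != 0 -> v (x * y) = v x + v y.
Hypothesis vD : forall {x y : F}, x != 0 -> y != 0 -> x + y != 0 ->
  Num.min (v x) (v y) <= v (x + y).

Lemma valuation1 : v 1 = 0.
Proof. by have := @vM 1 1 (oner_neq0 F) (oner_neq0 F); rewrite mulr1; lia. Qed.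

Lemma valuationV x : x != 0 -> v x^-1 = - v x.
Proof.
move=> x0; have := vM x0 (invr_neq0 x0).
by rewrite mulfV // valuation1; lia.
Qed.

Lemma valuationN x : x != 0 -> v (- x) = v x.
Proof.
move=> x0; have N10 : (-1 : F) != 0 by rewrite oppr_eq0 oner_neq0.
have vN1 : v (-1) = 0 by have := vM N10 N10; rewrite mulrNN mulr1 valuation1; lia.
by rewrite -mulN1r vM // vN1 add0r.
Qed.

Lemma valuation_expz t (z : int) : t != 0 -> v (t ^ z) = z * v t.
Proof.
move=> t0; have vX k : v (t ^+ k) = k%:Z * v t.
  elim: k => [|k IH]; first by rewrite expr0 valuation1 mul0r.
  by rewrite exprS vM ?expf_neq0 // IH intS mulrDl mul1r.
case: z => k; first exact: vX.
by rewrite NegzE -exprnN valuationV ?expf_neq0 // vX mulNr.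
Qed.

Lemma smallP {N x} : x != 0 -> small v N x <-> N <= v x.
Proof. by move=> x0; split=> [[/eqP|//]|]; [rewrite (negbTE x0) | right]. Qed.

Lemma small_mul {M N x y} : small v M x -> small v N y -> small v (M + N) (x * y).
Proof.
have [-> _ _|x0] := eqVneq x 0; first by rewrite mul0r; left.
have [-> _ _|y0] := eqVneq y 0; first by rewrite mulr0; left.
move=> /(smallP x0) Mx /(smallP y0) Ny.
by apply/(smallP (mulf_neq0 x0 y0)); rewrite vM //; apply: lerD.
Qed.

Lemma inO_mul x y : inO v x -> inO v y -> inO v (x * y).
Proof. exact: (@small_mul 0 0). Qed.

Lemma inO_add x y : inO v x -> inO v y -> inO v (x + y).
Proof.
have [-> _|x0] := eqVneq x 0; first by rewrite add0r.
have [-> //|y0] := eqVneq y 0; first by rewrite addr0.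
have [->|xy0] := eqVneq (x + y) 0; first by left.
move=> /(smallP x0) vx /(smallP y0) vy; apply/(smallP xy0).
by apply: le_trans (vD x0 y0 xy0); rewrite le_min vx vy.
Qed.

Lemma inO_opp x : inO v x -> inO v (- x).
Proof.
have [-> _|x0] := eqVneq x 0; first by rewrite oppr0; left.
have Nx0 : - x != 0 by rewrite oppr_eq0.
by move=> /(smallP x0) vx; apply/(smallP Nx0); rewrite valuationN.
Qed.

(* If [v a < 0] then [v c >= - v a > 0], so [v (a + c) = v a < 0]. *)
Lemma inO_mul_add a c : inO v (a * c) -> inO v (a + c) -> inO v a.
Proof.
have [-> _ _|a0] := eqVneq a 0; first by left.
have [-> _|c0] := eqVneq c 0; first by rewrite addr0.
move=> /(smallP (mulf_neq0 a0 c0)); rewrite vM // => vac.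
have [vapos _|vaneg] := lerP 0 (v a); first by right.
have [ac0 _|ac0] := eqVneq (a + c) 0.
  have ca : c = - a by apply/eqP; rewrite -addr_eq0 addrC ac0.
  by move: vac; rewrite ca valuationN //; lia.
move=> /(smallP ac0) vs; have Nc0 : - c != 0 by rewrite oppr_eq0.
have := vD ac0 Nc0; rewrite addrK valuationN // => /(_ a0).
by rewrite ge_min => /orP[]; lia.
Qed.

Lemma Xset_inO_cross b0 x y :
  Xset v b0 x y -> inO v (x.1 * y.2) /\ inO v (x.2 * y.1).
Proof.
move=> [_ [xx [yy sum]]].
have prod : inO v ((x.1 * y.2) * (x.2 * y.1)).
  by rewrite mulrACA [y.2 * _]mulrC; exact: inO_mul.
split; first exact: inO_mul_add sum.
apply: (inO_mul_add (c := x.1 * y.2)).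
  by rewrite [X in inO _ X]mulrC.
by rewrite [X in inO _ X]addrC.
Qed.

Lemma MsetO_Xset b0 x y : MsetO v b0 x y -> Xset v b0 x y.
Proof.
move=> [M [x1 [x2 [y1 y2]]]]; do 3?split=> //; last apply: inO_add.
all: exact: inO_mul.
Qed.

Lemma Mset_col1_neq0 (b0 : F) (x y : F * F) : b0 != 0 -> Mset b0 x y -> x.1 != 0 \/ y.1 != 0.
Proof.
move=> b00 M; have [x10|] := eqVneq x.1 0; last by left.
have [y10|] := eqVneq y.1 0; last by right.
by move: b00; rewrite -M x10 y10 !mul0r mulr0 subrr eqxx.
Qed.

Lemma small_cofactor a c : a != 0 -> inO v (a * c) -> small v (- v a) c.
Proof.
move=> a0; have [-> _|c0] := eqVneq c 0; first by left.
move=> /(smallP (mulf_neq0 a0 c0)); rewrite vM // => vac.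
by apply/(smallP c0); lia.
Qed.

Lemma exists_common_shift x1 x2 y1 y2 :
  inO v (x1 * x2) -> inO v (y1 * y2) -> inO v (x1 * y2) -> inO v (x2 * y1) ->
  x1 != 0 \/ y1 != 0 ->
  exists n : int,
    [/\ small v n x1, small v n y1, small v (- n) x2 & small v (- n) y2].
Proof.
move=> xx yy xy yx nz.
have [[x10 xmin]|[y10 ymin]] :
    (x1 != 0 /\ small v (v x1) y1) \/ (y1 != 0 /\ small v (v y1) x1).
  have [x10|x10] := eqVneq x1 0.
    have y10 : y1 != 0 by case: nz; rewrite ?x10 ?eqxx.
    by right; split; [|left].
  have [y10|y10] := eqVneq y1 0; first by left; split; [|left].
  have [le_xy|/ltW le_yx] := lerP (v x1) (v y1).
    by left; split; last exact/(smallP y10).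
  by right; split; last exact/(smallP x10).
- exists (v x1); split; [exact/(smallP x10) | by [] | |]; exact: small_cofactor.
- exists (v y1); split; [by [] | exact/(smallP y10) | |]; apply: small_cofactor => //.
    by rewrite mulrC.
Qed.

Lemma small_inO_expz t k a :
  t != 0 -> v t = 1 -> small v k a -> inO v (t ^ (- k) * a).
Proof.
move=> t0 vt ka.
have tk : small v (- k) (t ^ (- k)) by right; rewrite valuation_expz // vt mulr1.
by have := small_mul tk ka; rewrite addNr.
Qed.

End Valuation.

Section TorusAction.
Variables (F : fieldType) (t : F).
Hypothesis t0 : t != 0.

Lemma tact_mul12 n x y : (tact t n x).1 * (tact t n y).2 = x.1 * y.2.
Proof. by rewrite /= mulrACA -expfzDr // subrr expr0z mul1r. Qed.

Lemma tact_mul21 n x y : (tact t n x).2 * (tact t n y).1 = x.2 * y.1.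
Proof. by rewrite mulrC tact_mul12 mulrC. Qed.

Lemma tactNK n x : tact t n (tact t (- n) x) = x.
Proof.
by case: x => x1 x2; rewrite /tact /= opprK !mulrA -!expfzDr // addNr subrr !mul1r.
Qed.

Lemma Xset_tact v b0 n x y : Xset v b0 (tact t n x) (tact t n y) <-> Xset v b0 x y.
Proof. by rewrite /Xset /Mset !tact_mul12 !tact_mul21. Qed.

End TorusAction.

Theorem lemma4p12 (F : fieldType) (v : F -> int)
  (hF : is_local_field v) (h2 : residue_char_not2 v)
  (t : F) (ht0 : t != 0) (ht : v t = 1)
  (b0 : F) (hb0 : b0 != 0) :
  (forall x y : F * F,
     Xset v b0 x y <->
     exists n : int, exists x' y' : F * F,
       MsetO v b0 x' y' /\ x = tact t n x' /\ y = tact t n y')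
  /\ (~ inO v b0 -> forall x y : F * F, ~ Xset v b0 x y).
Proof.
have [vM vD] := (lf_vM hF, lf_vD hF).
split=> [x y|b0O x y Xxy]; last first.
  have [xy yx] := Xset_inO_cross vM vD Xxy.
  by apply: b0O; case: Xxy => <- _; apply: inO_add (inO_opp vM _).
split=> [Xxy|[n [x' [y' [/(MsetO_Xset vM vD) X' [-> ->]]]]]]; last exact/Xset_tact.
have [xy yx] := Xset_inO_cross vM vD Xxy.
have [M [xx [yy _]]] := Xxy.
have nz := Mset_col1_neq0 hb0 M.
have [n [sx1 sy1 sx2 sy2]] := exists_common_shift vM xx yy xy yx nz.
exists n, (tact t (- n) x), (tact t (- n) y); rewrite !tactNK //; split=> //.
have [M' _] : Xset v b0 (tact t (- n) x) (tact t (- n) y) by apply/Xset_tact.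
by split=> //; split; [|split; [|split]]; apply: small_inO_expz.
Qed.
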